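(* Let $n>5$ with $n\equiv 3\pmod 4$, and consider odd $r\in[3,n-4]$. Then $E(D_n^s[r,n-r-1])$ attains its maximum at $r=3$, and $$E(D_n^s[3,n-4])>E(D_n^s[5,n-6])>\dots>E\!\left(D_n^s\!\left[\tfrac{n-1}{2},\tfrac{n-1}{2}\right]\right),$$ the chain running over odd $r=3,5,7,\dots,\frac{n-1}{2}$.
   Context: A signed digraph (sidigraph) is a digraph in which every arc carries a sign $+1$ or $-1$; the energy of a sidigraph is the sum of the absolute values of the real parts of the eigenvalues of its signed adjacency matrix. For $k\ge 2$, $C_k$ denotes a directed cycle of length $k$ all of whose arc signs multiply to $+1$. It is known that for odd $k$, $E(C_k)=\csc\frac{\pi}{2k}$ (and the same holds for a negative cycle of odd length). For integers $p,q\ge2$ with $p+q\le n$, $D_n^s[p,q]$ denotes an $n$-vertex sidigraph whose only directed cycles are two vertex-disjoint positive cycles $C_p$ and $C_q$ (other vertices lie on no directed cycle); its energy is $E(C_p)+E(C_q)$. *)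

From Stdlib Require Import Reals Arith.
Open Scope R_scope.

(* Energy of a (positive or negative) directed cycle C_k of ODD length k,
   as given in the context: E(C_k) = csc(pi/(2k)).  Only used for odd k. *)
Definition energy_cycle (k : nat) : R := / sin (PI / (2 * INR k)).

(* Energy of D_n^s[p,q] (two vertex-disjoint positive cycles C_p, C_q on n
   vertices): E(D_n^s[p,q]) = E(C_p) + E(C_q), as given in the context. *)
Definition energy_D (n p q : nat) : R := energy_cycle p + energy_cycle q.

(* Writing F x = csc (PI / (2 x)) for the energy of an odd cycle of length x, the
   energy of D_n^s[r, n-r-1] is F r + F (n-1-r).  With t = PI / (2 x) one gets
   F' x = 2/PI * t^2 cos t / sin^2 t, and t^2 cos t / sin^2 t is decreasing on
   (0, 2/3] because 2 sin t cos t < t (1 + cos^2 t) there (a Taylor estimate).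
   Hence F is strictly convex on [3, oo), so moving two vertices from the
   smaller cycle to the larger one always increases the energy. *)

From Stdlib Require Import Reals Arith Lra Lia Psatz.
From Coquelicot Require Import Coquelicot.
Open Scope R_scope.

Lemma sin_le_taylor5 u : 0 <= u -> u <= 2 -> sin u <= u - u^3/6 + u^5/120.
Proof.
  intros u_ge0 u_le2. assert (HPI := PI2_3_2).
  destruct (SIN u u_ge0 ltac:(lra)) as [_ sin_ub9].
  unfold sin_ub, sin_approx, sin_term in sin_ub9.
  cbn [sum_f_R0 Nat.mul Nat.add] in sin_ub9.
  rewrite !fact_simpl, !mult_INR in sin_ub9; simpl INR in sin_ub9.
  match type of sin_ub9 with _ <= ?S =>
    replace S with (u - u^3/6 + u^5/120 - u^7/5040 + u^9/362880) in sin_ub9 by field end.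
  assert (0 <= u^7) by (apply pow_le; lra).
  assert (u^7 * (u * u) <= u^7 * 72) by (apply Rmult_le_compat_l; nra).
  replace (u^9) with (u^7 * (u * u)) in sin_ub9 by ring.
  lra.
Qed.

Lemma cos_ge_taylor2 u : 0 <= u -> u <= 3/2 -> 1 - u^2/2 <= cos u.
Proof.
  intros u_ge0 u_le. assert (HPI := PI2_3_2).
  destruct (COS u ltac:(lra) ltac:(lra)) as [cos_lb6 _].
  unfold cos_lb, cos_approx, cos_term in cos_lb6.
  cbn [sum_f_R0 Nat.mul Nat.add] in cos_lb6.
  rewrite !fact_simpl, !mult_INR in cos_lb6; simpl INR in cos_lb6.
  match type of cos_lb6 with ?S <= _ =>
    replace S with (1 - u^2/2 + u^4/24 - u^6/720) in cos_lb6 by field end.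
  assert (0 <= u^4) by (apply pow_le; lra).
  assert (u^4 * (u * u) <= u^4 * 30) by (apply Rmult_le_compat_l; nra).
  replace (u^6) with (u^4 * (u * u)) in cos_lb6 by ring.
  lra.
Qed.

Lemma two_sin_cos_lt t : 0 < t -> t <= 2/3 -> 2 * sin t * cos t < t * (1 + cos t ^ 2).
Proof.
  intros t_gt0 t_le.
  (* in terms of u = 2t the claim reads sin u < u/2 * (1 + (1 + cos u)/2) *)
  rewrite <- sin_2a.
  replace (cos t ^ 2) with ((1 + cos (2 * t)) / 2) by (rewrite cos_2a_cos; field).
  replace t with (2 * t / 2) at 2 by field.
  set (u := 2 * t).
  assert (u_gt0 : 0 < u) by (unfold u; lra).
  assert (u_le : u <= 4/3) by (unfold u; lra).
  assert (sin_ub := sin_le_taylor5 u ltac:(lra) ltac:(lra)).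
  assert (cos_lb := cos_ge_taylor2 u ltac:(lra) ltac:(lra)).
  assert (0 < u^3) by (apply pow_lt; lra).
  assert (u^3 * (u * u) < u^3 * 5) by (apply Rmult_lt_compat_l; nra).
  replace (u^5) with (u^3 * (u * u)) in sin_ub by ring.
  assert (u/2 * (1 + (1 + (1 - u^2/2))/2) <= u/2 * (1 + (1 + cos u)/2))
    by (apply Rmult_le_compat_l; lra).
  assert (u/2 * (1 + (1 + (1 - u^2/2))/2) = u - u^3/8) by field.
  lra.
Qed.

Definition csc_slope (t : R) : R := t^2 * cos t / sin t ^ 2.

Lemma csc_slope_derive t : sin t <> 0 ->
  derivable_pt_lim csc_slope t
    (t * (2 * sin t * cos t - t * (1 + cos t ^ 2)) / sin t ^ 3).
Proof.
  intros sin_neq0. apply is_derive_Reals. unfold csc_slope.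
  auto_derive; [auto|].
  replace (1 + cos t ^ 2) with (sin t ^ 2 + cos t ^ 2 + cos t ^ 2)
    by (rewrite <- (sin2_cos2 t); unfold Rsqr; ring).
  field; auto.
Qed.

Lemma csc_slope_decreasing t1 t2 : 0 < t1 -> t1 < t2 -> t2 <= 2/3 ->
  csc_slope t2 < csc_slope t1.
Proof.
  intros t1_gt0 t12 t2_le. assert (HPI := PI2_3_2).
  set (slope' := fun t => t * (2 * sin t * cos t - t * (1 + cos t ^ 2)) / sin t ^ 3).
  destruct (MVT_cor2 csc_slope slope' t1 t2 t12) as [c [mvt c_in]].
  { intros c c_in. apply csc_slope_derive, Rgt_not_eq, sin_gt_0; lra. }
  assert (0 < sin c) by (apply sin_gt_0; lra).
  assert (key := two_sin_cos_lt c ltac:(lra) ltac:(lra)).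
  assert (0 < / sin c ^ 3) by (apply Rinv_0_lt_compat, pow_lt; lra).
  assert (slope' c < 0).
  { unfold slope', Rdiv.
    assert (c * (2 * sin c * cos c - c * (1 + cos c ^ 2)) < 0) by nra. nra. }
  nra.
Qed.

Definition csc_energy (x : R) : R := / sin (PI / (2 * x)).

Lemma csc_energy_derive x : 3 <= x ->
  derivable_pt_lim csc_energy x (2 / PI * csc_slope (PI / (2 * x))).
Proof.
  intros x_ge3. assert (HPI := PI2_3_2).
  assert (0 < PI / (2 * x) < PI).
  { split; [apply Rdiv_lt_0_compat; lra|].
    apply (Rmult_lt_reg_r (2 * x)); [lra|].
    unfold Rdiv; rewrite Rmult_assoc, Rinv_l by lra; nra. }
  assert (0 < sin (PI / (2 * x))) by (apply sin_gt_0; lra).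
  apply is_derive_Reals. unfold csc_energy, csc_slope.
  auto_derive; [repeat split; lra|].
  unfold Rdiv in *. field. repeat split; lra.
Qed.

Lemma csc_energy_increment_lt a c h : 3 <= a -> 0 < h -> a + h <= c ->
  csc_energy (a + h) - csc_energy a < csc_energy (c + h) - csc_energy c.
Proof.
  intros a_ge3 h_gt0 ac. assert (HPI := PI2_3_2). assert (PI_le4 := PI_4).
  set (F' := fun x => 2 / PI * csc_slope (PI / (2 * x))).
  destruct (MVT_cor2 csc_energy F' a (a + h) ltac:(lra)) as [x1 [mvt1 x1_in]].
  { intros y y_in. apply csc_energy_derive. lra. }
  destruct (MVT_cor2 csc_energy F' c (c + h) ltac:(lra)) as [x2 [mvt2 x2_in]].
  { intros y y_in. apply csc_energy_derive. lra. }
  assert (slope_lt : F' x1 < F' x2).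
  { unfold F'. apply Rmult_lt_compat_l; [apply Rdiv_lt_0_compat; lra|].
    apply csc_slope_decreasing.
    - apply Rdiv_lt_0_compat; lra.
    - unfold Rdiv. apply Rmult_lt_compat_l; [lra|]. apply Rinv_lt_contravar; nra.
    - apply (Rmult_le_reg_r (2 * x1)); [lra|].
      unfold Rdiv; rewrite Rmult_assoc, Rinv_l by lra; nra. }
  rewrite mvt1, mvt2. replace (a + h - a) with h by ring. replace (c + h - c) with h by ring.
  nra.
Qed.

Lemma energy_cycle_INR k : energy_cycle k = csc_energy (INR k).
Proof. reflexivity. Qed.

Definition split_energy (n r : nat) : R := energy_D n r (n - r - 1).

Lemma split_energy_sym n r : (r < n)%nat -> split_energy n (n - r - 1) = split_energy n r.
Proof.
  intros r_lt. unfold split_energy, energy_D.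
  replace (n - (n - r - 1) - 1)%nat with r by lia. ring.
Qed.

Lemma split_energy_step n r : (3 <= r)%nat -> (2 * (r + 2) <= n - 1)%nat ->
  split_energy n (r + 2) < split_energy n r.
Proof.
  intros r_ge3 r_le.
  assert (3 <= INR r) by (replace 3 with (INR 3) by (simpl; ring); apply le_INR; lia).
  assert (2 * (INR r + 2) <= INR n - 1).
  { replace (2 * (INR r + 2)) with (INR (2 * (r + 2)))
      by (rewrite mult_INR, plus_INR; simpl; ring).
    replace (INR n - 1) with (INR (n - 1)) by (rewrite minus_INR by lia; reflexivity).
    apply le_INR; lia. }
  unfold split_energy, energy_D. rewrite !energy_cycle_INR.
  rewrite !minus_INR, plus_INR by lia. simpl INR.
  assert (convex := csc_energy_increment_lt (INR r) (INR n - INR r - 1 - 2) 2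
                      ltac:(lra) ltac:(lra) ltac:(lra)).
  replace (INR n - INR r - 1 - 2 + 2) with (INR n - INR r - 1) in convex by ring.
  replace (INR n - (INR r + (1 + 1)) - 1) with (INR n - INR r - 1 - 2) by ring.
  replace (INR r + (1 + 1)) with (INR r + 2) by ring.
  lra.
Qed.

Lemma split_energy_odd_decreasing n r r' : Nat.Odd r -> Nat.Odd r' ->
  (3 <= r)%nat -> (r < r')%nat -> (2 * r' <= n - 1)%nat ->
  split_energy n r' < split_energy n r.
Proof.
  intros [k ->] [k' ->] r_ge3 rr' r'_le.
  replace (2 * k' + 1)%nat with (2 * k + 1 + 2 * S (k' - k - 1))%nat in * by lia.
  generalize (2 * k + 1)%nat r_ge3 r'_le; clear.
  induction (k' - k - 1)%nat as [|d IH]; intros r r_ge3 r'_le.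
  - apply split_energy_step; lia.
  - apply Rlt_trans with (split_energy n (r + 2)).
    + replace (r + 2 * S (S d))%nat with (r + 2 + 2 * S d)%nat by lia. apply IH; lia.
    + apply split_energy_step; lia.
Qed.

Theorem lemma3p17 (n : nat) (hn : (5 < n)%nat) (hmod : (n mod 4 = 3)%nat) :
  (forall r : nat, Nat.Odd r -> (3 <= r <= n - 4)%nat ->
     energy_D n r (n - r - 1) <= energy_D n 3 (n - 4)) /\
  (forall r r' : nat, Nat.Odd r -> Nat.Odd r' ->
     (3 <= r)%nat -> (r < r')%nat -> (r' <= (n - 1) / 2)%nat ->
     energy_D n r (n - r - 1) > energy_D n r' (n - r' - 1)).
Proof.
  assert (odd3 : Nat.Odd 3) by (exists 1%nat; lia).
  assert (n_eq := Nat.div_mod n 4 ltac:(lia)). rewrite hmod in n_eq.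
  split.
  - intros r r_odd [r_ge3 r_le].
    replace (n - 4)%nat with (n - 3 - 1)%nat by lia.
    change (split_energy n r <= split_energy n 3).
    destruct (Nat.le_gt_cases (2 * r) (n - 1)) as [r_small | r_large].
    + destruct (Nat.eq_dec r 3) as [-> | r_neq3]; [lra|].
      left. apply split_energy_odd_decreasing; auto. lia.
    + (* since n = 3 mod 4, the complementary length n - r - 1 is odd as well *)
      rewrite <- split_energy_sym by lia.
      destruct (Nat.eq_dec (n - r - 1) 3) as [-> | q_neq3]; [lra|].
      destruct r_odd as [k r_eq].
      left. apply split_energy_odd_decreasing; try lia; try assumption.
      exists (2 * (n / 4) - k)%nat. lia.
  - intros r r' r_odd r'_odd r_ge3 rr' r'_le.
    apply split_energy_odd_decreasing; auto.
    assert (half := Nat.div_mod (n - 1) 2 ltac:(lia)).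
    assert (parity := Nat.mod_upper_bound (n - 1) 2 ltac:(lia)). lia.
Qed.
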